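(* Let $r,s_1,s_2\in\mathbb{N}_+$. Let $\boldsymbol B_0\in\mathbb{R}^{d_1\times d_2}$ be arbitrary and $\boldsymbol B_1,\dots,\boldsymbol B_r\in\{0,1\}^{d_1\times d_2}$ rank-1 matrices with $\langle\boldsymbol B_s,\boldsymbol B_{s'}\rangle=0$ for $s\ne s'$ and whose supports together involve at most $s_1$ rows and at most $s_2$ columns. Let $g_1,\dots,g_r:[0,1]\to\mathbb{R}$ be functions at least one of which is strictly monotonic. Draw $\pi\sim\mathrm{Unif}[0,1]$ and, given $\pi$, set $\boldsymbol X_\pi=\boldsymbol B_0+\sum_{s=1}^r g_s(\pi)\boldsymbol B_s$ (the noiseless case $\sigma=0$ of $\boldsymbol X_\pi=\boldsymbol B_0+\sum_s g_s(\pi)\boldsymbol B_s+\sigma\boldsymbol E$) and $Y_\pi\sim\mathrm{Bernoulli}(\pi)$ with $Y_\pi$ independent of $\boldsymbol X_\pi$ given $\pi$. Let $\mathbb{P}_{\boldsymbol X,Y}$ be the induced joint distribution of $(\boldsymbol X,Y)=(\boldsymbol X_\pi,Y_\pi)$, $\mathcal{X}=\{\boldsymbol X_\pi:\pi\in[0,1]\}$, and $f(\boldsymbol X)=\mathbb{E}(Y|\boldsymbol X)$ on $\mathcal{X}$. Then $f\in\mathcal F_{\mathrm{sgn}}(r,s_1,s_2)$.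
   Context: $\mathrm{sgn}(x)=1$ if $x>0$, $-1$ otherwise. $\Phi(r,s_1,s_2)=\{\boldsymbol X\mapsto\langle\boldsymbol X,\boldsymbol B\rangle+b:\mathrm{rank}(\boldsymbol B)\le r,\ \boldsymbol B\text{ has at most }s_1\text{ nonzero rows and }s_2\text{ nonzero columns},\ b\in\mathbb{R}\}$, with $\langle\boldsymbol X,\boldsymbol B\rangle=\mathrm{tr}(\boldsymbol X\boldsymbol B^T)$. $\mathcal F_{\mathrm{sgn}}(r,s_1,s_2)$ is the set of functions $f:\mathcal{X}\to[-1,1]$ such that for every level $\pi'\in[-1,1]$ there is $\phi\in\Phi(r,s_1,s_2)$ with $\mathrm{sgn}(f(\boldsymbol X)-\pi')=\mathrm{sgn}\,\phi(\boldsymbol X)$ for all $\boldsymbol X\in\mathcal{X}$. *)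

From HB Require Import structures.
From mathcomp Require Import all_boot all_order all_algebra.
From mathcomp Require Import reals.
Set Implicit Arguments. Unset Strict Implicit. Unset Printing Implicit Defensive.
Import Order.TTheory GRing.Theory Num.Theory.
Local Open Scope ring_scope.

Section Defs.
Variable R : realType.
Variables d1 d2 : nat.

Definition minner (X B : 'M[R]_(d1, d2)) : R := \tr (X *m B^T).

Definition sgn (x : R) : R := if 0 < x then 1 else -1.

Definition nz_rows (B : 'M[R]_(d1, d2)) : {set 'I_d1} :=
  [set i | [exists j, B i j != 0]].
Definition nz_cols (B : 'M[R]_(d1, d2)) : {set 'I_d2} :=
  [set j | [exists i, B i j != 0]].

(* (B, b) parametrizes an element X |-> <X,B> + b of Phi(r, s1, s2) *)
Definition in_Phi (r s1 s2 : nat) (B : 'M[R]_(d1, d2)) (b : R) : Prop :=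
  (\rank B <= r)%N /\ (#|nz_rows B| <= s1)%N /\ (#|nz_cols B| <= s2)%N.

Definition F_sgn (calX : 'M[R]_(d1, d2) -> Prop) (r s1 s2 : nat)
    (f : 'M[R]_(d1, d2) -> R) : Prop :=
  (forall X, calX X -> -1 <= f X <= 1) /\
  forall pi' : R, -1 <= pi' <= 1 ->
    exists (B : 'M[R]_(d1, d2)) (b : R), in_Phi r s1 s2 B b /\
      forall X, calX X -> sgn (f X - pi') = sgn (minner X B + b).

Definition Xpi (r : nat) (B0 : 'M[R]_(d1, d2)) (Bs : 'I_r -> 'M[R]_(d1, d2))
    (g : 'I_r -> R -> R) (p : R) : 'M[R]_(d1, d2) :=
  B0 + \sum_(s < r) g s p *: Bs s.

Definition in01 (p : R) : Prop := 0 <= p <= 1.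
Definition calX_of r B0 Bs g (X : 'M[R]_(d1, d2)) : Prop :=
  exists p, in01 p /\ X = @Xpi r B0 Bs g p.

Definition bernoulli_mean (p : R) : R := p * 1 + (1 - p) * 0.

(* f(X) = E(Y | X) on calX: whenever the observation X = X_p0 determines the
   latent variable (the fiber {p in [0,1] : X_p = X_p0} is {p0}), the
   conditional expectation of Y given X = X_p0 is E(Y | pi = p0). *)
Definition is_cond_exp_Y_given_X r B0 Bs g (f : 'M[R]_(d1, d2) -> R) : Prop :=
  forall p0, in01 p0 ->
    (forall p, in01 p -> @Xpi r B0 Bs g p = Xpi B0 Bs g p0 -> p = p0) ->
    f (Xpi B0 Bs g p0) = bernoulli_mean p0.

Definition strictly_monotone_on01 (h : R -> R) : Prop :=
  (forall x y, in01 x -> in01 y -> x < y -> h x < h y) \/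
  (forall x y, in01 x -> in01 y -> x < y -> h y < h x).

End Defs.

From HB Require Import structures.
From mathcomp Require Import all_boot all_order all_algebra.
From mathcomp Require Import reals.
Import Order.TTheory GRing.Theory Num.Theory.
Local Open Scope ring_scope.

(* Let g_{s0} be strictly monotone.  Because the B_s are 0/1 matrices with
   pairwise zero inner products, B_{s0} has an entry (i0, j0) equal to 1 at
   which every other B_s vanishes, so the (i0, j0) entry of X_pi is
   B0 i0 j0 + g_{s0}(pi).  This entry determines pi, hence f(X_pi) = pi, and
   sgn(f(X) - pi') is the sign of +-(X i0 j0 - B0 i0 j0 - g_{s0}(pi')), a
   classifier built on the rank-one, one-row, one-column matrix
   delta_mx i0 j0 (levels pi' < 0 get a constant classifier). *)

Lemma minnerE {R : realType} d1 d2 (X B : 'M[R]_(d1, d2)) :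
  minner X B = \sum_i \sum_j X i j * B i j.
Proof.
rewrite /minner /mxtrace; apply: eq_bigr => i _; rewrite mxE.
by apply: eq_bigr => j _; rewrite mxE.
Qed.

Lemma minner_scale_delta {R : realType} d1 d2 (X : 'M[R]_(d1, d2)) c i0 j0 :
  minner X (c *: delta_mx i0 j0) = c * X i0 j0.
Proof.
rewrite minnerE (bigD1 i0) //= (bigD1 j0) //= big1 => [|j /negbTE neq_j].
  rewrite big1 => [|i /negbTE neq_i]; last first.
    by apply: big1 => j _; rewrite !mxE neq_i mulr0 mulr0.
  by rewrite !mxE !eqxx mulr1 !addr0 mulrC.
by rewrite !mxE eqxx neq_j mulr0 mulr0.
Qed.

Lemma in_Phi_scale_delta {R : realType} d1 d2 r s1 s2 c
    (i0 : 'I_d1) (j0 : 'I_d2) b :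
  (0 < r)%N -> (0 < s1)%N -> (0 < s2)%N ->
  in_Phi r s1 s2 (c *: delta_mx i0 j0 : 'M[R]_(d1, d2)) b.
Proof.
move=> r_gt0 s1_gt0 s2_gt0; split; [|split].
- by apply: leq_trans (mxrank_scale _ _) _; rewrite mxrank_delta.
- apply: leq_trans s1_gt0; rewrite -(cards1 i0); apply: subset_leq_card.
  apply/subsetP => i; rewrite !inE => /existsP [j]; rewrite !mxE.
  by apply: contraR => /negbTE ->; rewrite mulr0.
- apply: leq_trans s2_gt0; rewrite -(cards1 j0); apply: subset_leq_card.
  apply/subsetP => j; rewrite !inE => /existsP [i]; rewrite !mxE.
  by apply: contraR => /negbTE ->; rewrite andbF mulr0.
Qed.

Lemma minner_ge0_eq0 {R : realType} d1 d2 (A B : 'M[R]_(d1, d2)) i j :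
  (forall i j, 0 <= A i j) -> (forall i j, 0 <= B i j) ->
  minner A B = 0 -> A i j * B i j = 0.
Proof.
move=> A_ge0 B_ge0; rewrite minnerE => /psumr_eq0P sum_eq0.
have AB_ge0 i' j' : 0 <= A i' j' * B i' j' by rewrite mulr_ge0.
have /psumr_eq0P -> // : \sum_j A i j * B i j = 0.
by apply: sum_eq0 => // i' _; rewrite sumr_ge0.
Qed.

Lemma matrix_neq0_entry {R : zmodType} m n (A : 'M[R]_(m, n)) :
  A != 0 -> exists i j, A i j != 0.
Proof.
move=> /eqP A_neq0.
have [[i j] /= Aij_neq0|no_entry] :=
  pickP (fun ij : 'I_m * 'I_n => A ij.1 ij.2 != 0); first by exists i, j.
case: A_neq0; apply/matrixP => i j; rewrite mxE.
exact/eqP/negbFE/(no_entry (i, j)).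
Qed.

Lemma orthogonal_binary_private_entry {R : realType} {d1 d2 r : nat}
    {Bs : 'I_r -> 'M[R]_(d1, d2)} {s0 : 'I_r} :
  (forall s i j, Bs s i j = 0 \/ Bs s i j = 1) ->
  (forall s s', s != s' -> minner (Bs s) (Bs s') = 0) ->
  Bs s0 != 0 -> exists i0 j0, forall s, Bs s i0 j0 = (s == s0)%:R.
Proof.
move=> binary orth /matrix_neq0_entry [i0 [j0 Bs0_neq0]].
have Bs_ge0 s i j : 0 <= Bs s i j by case: (binary s i j) => ->.
have Bs0_eq1 : Bs s0 i0 j0 = 1.
  by case: (binary s0 i0 j0) Bs0_neq0 => // ->; rewrite eqxx.
exists i0, j0 => s; have [-> //|neq_s] := eqVneq s s0.
rewrite -[Bs s i0 j0]mul1r -Bs0_eq1.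
by apply: minner_ge0_eq0 => //; apply: orth; rewrite eq_sym.
Qed.

Lemma increasing_on01_ltE {R : realType} {k : R -> R} p q :
  (forall x y, in01 x -> in01 y -> x < y -> k x < k y) ->
  in01 p -> in01 q -> (k q < k p) = (q < p).
Proof.
move=> k_mono p01 q01; case: (ltgtP q p) => [lt_qp|lt_pq|->].
- exact: k_mono.
- by apply/negbTE; rewrite -leNgt ltW // k_mono.
- by rewrite ltxx.
Qed.

Lemma strictly_monotone_on01_sign {R : realType} {h : R -> R} :
  strictly_monotone_on01 h -> exists e : R,
    forall p q, in01 p -> in01 q -> (0 < e * (h p - h q)) = (q < p).
Proof.
case=> h_mono; [exists 1 | exists (-1)] => p q p01 q01.
  by rewrite mul1r subr_gt0 increasing_on01_ltE.
rewrite mulN1r opprB subr_gt0 -ltrN2.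
apply: (increasing_on01_ltE (k := fun x => - h x)) => // x y *.
by rewrite ltrN2 h_mono.
Qed.

Lemma strictly_monotone_on01_inj {R : realType} {h : R -> R} p q :
  strictly_monotone_on01 h -> in01 p -> in01 q -> h p = h q -> p = q.
Proof.
move=> /strictly_monotone_on01_sign [e h_sign] p01 q01 h_eq.
apply/eqP; rewrite eq_le !leNgt -(h_sign p q) // -(h_sign q p) //.
by rewrite h_eq subrr mulr0 ltxx.
Qed.

Section IdentifiableModel.
Context {R : realType} {d1 d2 r : nat}.
Context {B0 : 'M[R]_(d1, d2)} {Bs : 'I_r -> 'M[R]_(d1, d2)}.
Context {g : 'I_r -> R -> R}.
Context {f : 'M[R]_(d1, d2) -> R} {s0 : 'I_r} {i0 : 'I_d1} {j0 : 'I_d2}.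
Hypothesis Bs_at : forall s, Bs s i0 j0 = (s == s0)%:R.
Hypothesis g_mono : strictly_monotone_on01 (g s0).
Hypothesis f_cond_exp : is_cond_exp_Y_given_X B0 Bs g f.

Lemma Xpi_at p : Xpi B0 Bs g p i0 j0 = B0 i0 j0 + g s0 p.
Proof.
rewrite /Xpi mxE summxE (bigD1 s0) //= big1 => [|s /negbTE neq_s].
  by rewrite mxE Bs_at eqxx mulr1 addr0.
by rewrite mxE Bs_at neq_s mulr0.
Qed.

Lemma f_Xpi p : in01 p -> f (Xpi B0 Bs g p) = p.
Proof.
move=> p01; rewrite f_cond_exp // => [|q q01].
  by rewrite /bernoulli_mean mulr1 mulr0 addr0.
move=> /(congr1 (fun X : 'M_(d1, d2) => X i0 j0)); rewrite !Xpi_at => /addrI.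
exact: strictly_monotone_on01_inj.
Qed.

Lemma F_sgn_identifiable {s1 s2 : nat} :
  (0 < r)%N -> (0 < s1)%N -> (0 < s2)%N ->
  F_sgn (calX_of B0 Bs g) r s1 s2 f.
Proof.
move=> r_gt0 s1_gt0 s2_gt0; split=> [_ [p [p01 ->]]|pi' /andP [pi'_ge pi'_le]].
  rewrite f_Xpi //; case/andP: p01 => p_ge0 ->; rewrite andbT.
  exact: le_trans (lerN10 _) p_ge0.
have [pi'_lt0|pi'_ge0] := ltP pi' 0.
  exists (0 *: delta_mx i0 j0), 1; split; first exact: in_Phi_scale_delta.
  move=> _ [p [p01 ->]]; rewrite f_Xpi // minner_scale_delta mul0r add0r.
  case/andP: p01 => p_ge0 _.
  by rewrite /sgn ltr01 subr_gt0 (lt_le_trans pi'_lt0).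
have pi'01 : in01 pi' by apply/andP.
have [e g_sign] := strictly_monotone_on01_sign g_mono.
exists (e *: delta_mx i0 j0), (- (e * (B0 i0 j0 + g s0 pi'))).
split; first exact: in_Phi_scale_delta.
move=> _ [p [p01 ->]]; rewrite f_Xpi // minner_scale_delta Xpi_at.
by rewrite -mulrBr opprD addrACA subrr add0r /sgn subr_gt0 g_sign.
Qed.

End IdentifiableModel.

Theorem proposition4 (R : realType) (d1 d2 r s1 s2 : nat)
  (B0 : 'M[R]_(d1, d2)) (Bs : 'I_r -> 'M[R]_(d1, d2)) (g : 'I_r -> R -> R)
  (f : 'M[R]_(d1, d2) -> R) :
  (0 < r)%N -> (0 < s1)%N -> (0 < s2)%N ->
  (forall s i j, Bs s i j = 0 \/ Bs s i j = 1) ->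
  (forall s, \rank (Bs s) = 1%N) ->
  (forall s s', s != s' -> minner (Bs s) (Bs s') = 0) ->
  (#|[set i | [exists s, exists j, Bs s i j != 0%R]]| <= s1)%N ->
  (#|[set j | [exists s, exists i, Bs s i j != 0%R]]| <= s2)%N ->
  (exists s, strictly_monotone_on01 (g s)) ->
  is_cond_exp_Y_given_X B0 Bs g f ->
  F_sgn (calX_of B0 Bs g) r s1 s2 f.
Proof.
move=> r_gt0 s1_gt0 s2_gt0 binary rank1 orth _ _ [s0 g_mono] f_cond_exp.
have Bs0_neq0 : Bs s0 != 0 by rewrite -mxrank_eq0 rank1.
have [i0 [j0 Bs_at]] := orthogonal_binary_private_entry binary orth Bs0_neq0.
exact: (F_sgn_identifiable Bs_at g_mono f_cond_exp r_gt0 s1_gt0 s2_gt0).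
Qed.
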